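(* For every integer $r\ge1$ and every $n\ge0$, $$B^{(r)}_{n,q}(x)=\sum_{k=0}^{n}\binom{n}{k}_q\left(\int_0^1B^{(r)}_{n-k,q}(y)\,d_qy\right)B_{k,q}(x)=\sum_{k=0}^{n}\binom{n}{k}_qB^{(r-1)}_{n-k,q}\,B_{k,q}(x);$$ in particular $\int_0^1B^{(r)}_{m,q}(y)\,d_qy=B^{(r-1)}_{m,q}$ for all $m\ge0$.
   Context: Fix $q$ with $0<q<1$. For an integer $n\geq 0$ let $[n]_q=\frac{1-q^n}{1-q}$, $[n]_q!=[n]_q[n-1]_q\cdots[1]_q$ (with $[0]_q!=1$), and for $0\le l\le n$ let $\binom{n}{l}_q=\frac{[n]_q!}{[l]_q!\,[n-l]_q!}$. Let $e_q(t)=\sum_{n\ge0}\frac{t^n}{[n]_q!}$ (a formal power series). The $q$-Bernoulli polynomials $B_{n,q}(x)$ are defined by $\frac{t}{e_q(t)-1}e_q(xt)=\sum_{n\ge0}B_{n,q}(x)\frac{t^n}{[n]_q!}$. For an integer $r\ge0$, the $q$-Bernoulli polynomials of order $r$ are defined by $\left(\frac{t}{e_q(t)-1}\right)^{r}e_q(xt)=\sum_{n\ge0}B^{(r)}_{n,q}(x)\frac{t^n}{[n]_q!}$, with $B^{(r)}_{n,q}=B^{(r)}_{n,q}(0)$ (so $B^{(0)}_{n,q}=\delta_{n,0}$ and $B^{(1)}_{n,q}(x)=B_{n,q}(x)$). The Jackson $q$-integral is $\int_0^1 f(y)\,d_qy=(1-q)\sum_{a=0}^{\infty}f(q^a)q^a$.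 *)

From Stdlib Require Import Reals Arith ClassicalEpsilon.
Open Scope R_scope.

Definition qnum (q : R) (n : nat) : R := (1 - q ^ n) / (1 - q).

Fixpoint qfact (q : R) (n : nat) : R :=
  match n with
  | O => 1
  | S m => qnum q (S m) * qfact q m
  end.

Definition qbinom (q : R) (n l : nat) : R :=
  qfact q n / (qfact q l * qfact q (n - l)).

(* Coefficients of the power series (e_q(t) - 1)/t = sum_j t^j / [j+1]_q! *)
Definition ecoef (q : R) (j : nat) : R := / qfact q (S j).

(* bvec q n k = k-th coefficient of t/(e_q(t)-1) (valid for k <= n),
   computed as the inverse power series of (e_q(t)-1)/t:
   b_0 = 1, b_k = - sum_{j=1}^k c_j b_{k-j}  (c_0 = 1). *)
Fixpoint bvec (q : R) (n : nat) : nat -> R :=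
  match n with
  | O => fun k => if Nat.eqb k 0 then 1 else 0
  | S n' =>
      let f := bvec q n' in
      fun k => if Nat.leb k n' then f k
               else - sum_f_R0 (fun i => ecoef q (S i) * f (n' - i)%nat) n'
  end.

(* coefficient of t^n in t/(e_q(t)-1) *)
Definition tdcoef (q : R) (n : nat) : R := bvec q n n.

(* coefficient of t^n in (t/(e_q(t)-1))^r *)
Fixpoint tdpow (q : R) (r n : nat) : R :=
  match r with
  | O => if Nat.eqb n 0 then 1 else 0
  | S r' => sum_f_R0 (fun i => tdcoef q i * tdpow q r' (n - i)) n
  end.

(* (t/(e_q(t)-1))^r e_q(xt) = sum_n B^{(r)}_{n,q}(x) t^n/[n]_q! *)
Definition qBernPoly (q : R) (r n : nat) (x : R) : R :=
  qfact q n * sum_f_R0 (fun k => tdpow q r (n - k) * (x ^ k / qfact q k)) n.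

Definition qBernNum (q : R) (r n : nat) : R := qBernPoly q r n 0.

Definition jackson_summand (q : R) (f : R -> R) (a : nat) : R := f (q ^ a) * q ^ a.

Definition jackson_converges (q : R) (f : R -> R) : Prop :=
  exists S, infinite_sum (jackson_summand q f) S.

Definition jackson_integral (q : R) (f : R -> R) : R :=
  (1 - q) * epsilon (inhabits 0) (fun S => infinite_sum (jackson_summand q f) S).

From Stdlib Require Import Reals Arith Lia Lra ClassicalEpsilon.
Open Scope R_scope.

(* Work with coefficient sequences of formal power series in t,
   multiplied by the Cauchy product [conv].  Put
     E(t) = (e_q(t) - 1)/t = sum_j t^j/[j+1]_q!   (coefficients [ecoef]),
     D(t) = t/(e_q(t) - 1)                        (coefficients [tdcoef]),
   and X(t) = e_q(xt) = sum_k x^k t^k/[k]_q!.  By definition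
   B^(r)_{n,q}(x)/[n]_q! is the t^n-coefficient of X D^r, and D is built as the
   inverse of E, so E D = 1.
   - Addition formula: X D^(r+1) = (X D) D^r, i.e. associativity of [conv],
     gives B^(r+1)_n(x) = sum_k [n choose k]_q B^(r)_{n-k} B_k(x).
   - Jackson integral: the q-integral of y^k over [0,1] is the geometric sum
     (1-q) sum_a q^(a(k+1)) = 1/[k+1]_q, so the q-integral of B^(r)_m/[m]_q! is
     the t^m-coefficient of E D^r = D^(r-1), i.e. B^(r-1)_m/[m]_q!. *)

Lemma sum_split_first (f : nat -> R) (n : nat) :
  sum_f_R0 f (S n) = f 0%nat + sum_f_R0 (fun i => f (S i)) n.
Proof.
  induction n as [|n IH].
  - reflexivity.
  - rewrite tech5, IH, tech5. ring.
Qed.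

Lemma sum_reverse (f : nat -> R) (n : nat) :
  sum_f_R0 f n = sum_f_R0 (fun i => f (n - i)%nat) n.
Proof.
  revert f; induction n as [|n IH]; intro f.
  - reflexivity.
  - rewrite sum_split_first, (IH (fun i => f (S i))), tech5.
    replace (S n - S n)%nat with 0%nat by lia.
    rewrite Rplus_comm. f_equal. apply sum_eq. intros i Hi. f_equal. lia.
Qed.

Lemma sum_triangle_swap (g : nat -> nat -> R) (n : nat) :
  sum_f_R0 (fun i => sum_f_R0 (fun j => g i j) i) n =
  sum_f_R0 (fun j => sum_f_R0 (fun k => g (j + k)%nat j) (n - j)) n.
Proof.
  induction n as [|n IH].
  - reflexivity.
  - rewrite tech5, IH, (tech5 (fun j => sum_f_R0 _ _)), Nat.sub_diag.
    rewrite (tech5 (fun j => g (S n) j)), <- Rplus_assoc, <- plus_sum.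
    f_equal.
    + apply sum_eq. intros j Hj.
      replace (S n - j)%nat with (S (n - j)) by lia.
      rewrite tech5. replace (j + S (n - j))%nat with (S n) by lia.
      reflexivity.
    + simpl. rewrite Nat.add_0_r. reflexivity.
Qed.

Definition conv (a b : nat -> R) (n : nat) : R :=
  sum_f_R0 (fun i => a i * b (n - i)%nat) n.

Definition delta (k : nat) : R := if Nat.eqb k 0 then 1 else 0.

Lemma conv_ext (a a' b b' : nat -> R) (n : nat) :
  (forall k, a k = a' k) -> (forall k, b k = b' k) -> conv a b n = conv a' b' n.
Proof. intros Ha Hb. unfold conv. apply sum_eq. intros. rewrite Ha, Hb. reflexivity. Qed.

Lemma conv_comm (a b : nat -> R) (n : nat) : conv a b n = conv b a n.
Proof.
  unfold conv. rewrite sum_reverse. apply sum_eq. intros i Hi.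
  replace (n - (n - i))%nat with i by lia. ring.
Qed.

Lemma conv_assoc (a b c : nat -> R) (n : nat) :
  conv (conv a b) c n = conv a (conv b c) n.
Proof.
  unfold conv.
  transitivity (sum_f_R0 (fun i =>
    sum_f_R0 (fun j => a j * b (i - j)%nat * c (n - i)%nat) i) n).
  - apply sum_eq. intros i Hi. rewrite Rmult_comm, scal_sum.
    apply sum_eq. intros; ring.
  - rewrite sum_triangle_swap. apply sum_eq. intros j Hj. rewrite scal_sum.
    apply sum_eq. intros k Hk.
    replace (j + k - j)%nat with k by lia.
    replace (n - (j + k))%nat with (n - j - k)%nat by lia. ring.
Qed.

Lemma conv_delta_r (a : nat -> R) (n : nat) : conv a delta n = a n.
Proof.
  unfold conv. destruct n as [|n].
  - unfold delta. simpl. ring.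
  - rewrite tech5, sum_eq_R0, Nat.sub_diag.
    + unfold delta. simpl. ring.
    + intros i Hi. unfold delta.
      replace (Nat.eqb (S n - i) 0) with false by (symmetry; apply Nat.eqb_neq; lia).
      ring.
Qed.

(* The series D = t/(e_q(t)-1).  [bvec q n] stores the first n+1 coefficients,
   and enlarging n does not change them; hence the recursion defining the
   coefficients says exactly that D is the inverse of E. *)

Lemma bvec_stable (q : R) (d k : nat) : bvec q (k + d) k = bvec q k k.
Proof.
  induction d as [|d IH].
  - rewrite Nat.add_0_r. reflexivity.
  - replace (k + S d)%nat with (S (k + d)) by lia. simpl.
    replace (Nat.leb k (k + d)) with true by (symmetry; apply Nat.leb_le; lia).
    exact IH.
Qed.

Lemma tdcoef_S (q : R) (n : nat) :
  tdcoef q (S n) = - sum_f_R0 (fun i => ecoef q (S i) * tdcoef q (n - i)%nat) n.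
Proof.
  unfold tdcoef at 1. simpl.
  replace (match n with 0%nat => false | S m => Nat.leb n m end) with false
    by (destruct n; [reflexivity | symmetry; apply Nat.leb_gt; lia]).
  f_equal. apply sum_eq. intros i Hi. f_equal. unfold tdcoef.
  replace n with ((n - i) + i)%nat at 1 by lia. apply bvec_stable.
Qed.

Lemma ecoef_0 (q : R) : q <> 1 -> ecoef q 0 = 1.
Proof.
  intro Hq. unfold ecoef. simpl. unfold qnum. simpl.
  field. intro E. apply Hq. lra.
Qed.

Lemma ecoef_conv_tdcoef (q : R) (m : nat) :
  q <> 1 -> conv (ecoef q) (tdcoef q) m = delta m.
Proof.
  intro Hq. unfold conv, delta. destruct m as [|n].
  - simpl. rewrite (ecoef_0 q Hq). unfold tdcoef. simpl. ring.
  - rewrite sum_split_first, (ecoef_0 q Hq), Nat.sub_0_r, tdcoef_S. simpl. ring.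
Qed.

Lemma tdpow_1 (q : R) (k : nat) : tdpow q 1 k = tdcoef q k.
Proof. apply conv_delta_r. Qed.

Lemma ecoef_conv_tdpow_S (q : R) (r m : nat) :
  q <> 1 -> conv (ecoef q) (tdpow q (S r)) m = tdpow q r m.
Proof.
  intro Hq.
  assert (HD : forall k, conv (tdcoef q) (ecoef q) k = delta k)
    by (intro k; rewrite conv_comm; apply ecoef_conv_tdcoef, Hq).
  rewrite conv_comm, (conv_ext _ (conv (tdpow q r) (tdcoef q)) _ (ecoef q)).
  - rewrite conv_assoc, (conv_ext _ (tdpow q r) _ delta _ (fun _ => eq_refl) HD).
    apply conv_delta_r.
  - intro k. apply conv_comm.
  - reflexivity.
Qed.

Lemma qfact_pos (q : R) (m : nat) : 0 < q -> q < 1 -> 0 < qfact q m.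
Proof.
  intros H0 H1. induction m as [|m IH]; simpl.
  - lra.
  - apply Rmult_lt_0_compat; [|exact IH]. unfold qnum.
    assert (q ^ S m < 1) by (apply pow_lt_1_compat; [lra | lia]).
    apply Rdiv_lt_0_compat; lra.
Qed.

Lemma qBernPoly_conv (q : R) (r n : nat) (x : R) :
  qBernPoly q r n x = qfact q n * conv (fun k => x ^ k / qfact q k) (tdpow q r) n.
Proof. unfold qBernPoly, conv. f_equal. apply sum_eq. intros; ring. Qed.

Lemma qBernNum_coef (q : R) (r n : nat) : qBernNum q r n = qfact q n * tdpow q r n.
Proof.
  unfold qBernNum, qBernPoly. f_equal. destruct n as [|n].
  - simpl. field.
  - rewrite sum_split_first, sum_eq_R0.
    + simpl. field.
    + intros. rewrite pow_ne_zero by lia. unfold Rdiv. ring.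
Qed.

(* Addition formula, from X D^(r+1) = (X D) D^r. *)
Lemma qBernPoly_addition (q : R) (r n : nat) (x : R) :
  0 < q -> q < 1 ->
  qBernPoly q (S r) n x =
    sum_f_R0 (fun k => qbinom q n k * qBernNum q r (n - k) * qBernPoly q 1 k x) n.
Proof.
  intros H0 H1. set (X := fun k => x ^ k / qfact q k).
  transitivity (qfact q n * conv (conv X (tdcoef q)) (tdpow q r) n).
  - rewrite qBernPoly_conv, conv_assoc. reflexivity.
  - unfold conv at 1. rewrite scal_sum. apply sum_eq. intros k Hk.
    rewrite qBernNum_coef, qBernPoly_conv.
    rewrite (conv_ext X X (tdpow q 1) (tdcoef q)) by (intro; try apply tdpow_1; reflexivity).
    pose proof (qfact_pos q k H0 H1). pose proof (qfact_pos q (n - k) H0 H1).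
    unfold qbinom, X. field. split; lra.
Qed.

Lemma infinite_sum_ext (f g : nat -> R) (l : R) :
  (forall a, f a = g a) -> infinite_sum f l -> infinite_sum g l.
Proof.
  intros H Hf eps He. destruct (Hf eps He) as [N HN]. exists N. intros n Hn.
  rewrite <- (sum_eq f g n) by (intros; apply H). exact (HN n Hn).
Qed.

Lemma infinite_sum_plus (f g : nat -> R) (l1 l2 : R) :
  infinite_sum f l1 -> infinite_sum g l2 ->
  infinite_sum (fun a => f a + g a) (l1 + l2).
Proof.
  intros Hf Hg eps He. destruct (CV_plus _ _ _ _ Hf Hg eps He) as [N HN].
  exists N. intros n Hn. rewrite plus_sum. exact (HN n Hn).
Qed.

Lemma jackson_monomial (q : R) (c : R) (k : nat) :
  0 < q -> q < 1 ->
  infinite_sum (fun a => c * (q ^ a) ^ k * q ^ a) (c / (1 - q ^ S k)).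
Proof.
  intros H0 H1.
  assert (Hratio : 0 <= q ^ S k < 1) by (apply pow_lt_1_compat; [lra | lia]).
  assert (Hgeom : Un_cv (sum_f_R0 (fun a => 1 * (q ^ S k) ^ a)) (/ (1 - q ^ S k)))
    by (apply GP_infinite; rewrite Rabs_pos_eq; lra).
  assert (Hconst : Un_cv (fun _ => c) c).
  { intros eps He. exists 0%nat. intros. unfold Rdist.
    rewrite Rminus_diag, Rabs_R0. lra. }
  intros eps He. destruct (CV_mult _ _ _ _ Hconst Hgeom eps He) as [N HN].
  exists N. intros n Hn. specialize (HN n Hn). cbv beta in HN. rewrite scal_sum in HN.
  rewrite (sum_eq _ (fun a => 1 * (q ^ S k) ^ a * c)); [exact HN|].
  intros a _. rewrite <- !pow_mult, Rmult_assoc, <- pow_add.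
  replace (a * k + a)%nat with (S k * a)%nat by lia. ring.
Qed.

Lemma jackson_polynomial (q : R) (c : nat -> R) (m : nat) :
  0 < q -> q < 1 ->
  infinite_sum (fun a => sum_f_R0 (fun k => c k * (q ^ a) ^ k) m * q ^ a)
    (sum_f_R0 (fun k => c k / (1 - q ^ S k)) m).
Proof.
  intros H0 H1. induction m as [|m IH].
  - apply jackson_monomial; assumption.
  - apply (infinite_sum_ext (fun a => sum_f_R0 (fun k => c k * (q ^ a) ^ k) m * q ^ a
                                      + c (S m) * (q ^ a) ^ S m * q ^ a)).
    + intro a. simpl. ring.
    + apply infinite_sum_plus; [exact IH | apply jackson_monomial; assumption].
Qed.

Lemma jackson_sum_qBernPoly (q : R) (r m : nat) :
  0 < q -> q < 1 ->
  infinite_sum (jackson_summand q (qBernPoly q r m))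
    (sum_f_R0 (fun k => qfact q m * tdpow q r (m - k) / qfact q k / (1 - q ^ S k)) m).
Proof.
  intros H0 H1.
  eapply infinite_sum_ext;
    [|apply (jackson_polynomial q (fun k => qfact q m * tdpow q r (m - k) / qfact q k));
      assumption].
  intro a. unfold jackson_summand, qBernPoly. f_equal. rewrite scal_sum.
  apply sum_eq. intros; unfold Rdiv; ring.
Qed.

(* Since (1-q)/(1-q^(k+1)) = 1/[k+1]_q, the Jackson integral of
   B^(r)_m/[m]_q! is the t^m-coefficient of E D^r. *)
Lemma jackson_integral_qBernPoly (q : R) (r m : nat) :
  0 < q -> q < 1 ->
  jackson_integral q (qBernPoly q r m) = qfact q m * conv (ecoef q) (tdpow q r) m.
Proof.
  intros H0 H1. unfold jackson_integral.
  pose proof (jackson_sum_qBernPoly q r m H0 H1) as J.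
  pose proof (epsilon_spec (inhabits 0)
    (fun S => infinite_sum (jackson_summand q (qBernPoly q r m)) S)
    (ex_intro _ _ J)) as E.
  rewrite (uniqueness_sum _ _ _ E J).
  unfold conv. rewrite !scal_sum. apply sum_eq. intros k Hk.
  unfold ecoef. simpl qfact. unfold qnum.
  pose proof (qfact_pos q k H0 H1).
  assert (q ^ S k < 1) by (apply pow_lt_1_compat; [lra | lia]).
  field. repeat split; lra.
Qed.

(* Hence the q-integral of B^(r+1)_m is B^(r)_m, because E D^(r+1) = D^r. *)
Lemma jackson_integral_qBernPoly_S (q : R) (r m : nat) :
  0 < q -> q < 1 ->
  jackson_integral q (qBernPoly q (S r) m) = qBernNum q r m.
Proof.
  intros H0 H1.
  rewrite jackson_integral_qBernPoly, qBernNum_coef, ecoef_conv_tdpow_S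
    by (assumption || lra).
  reflexivity.
Qed.

Theorem theorem4 (q : R) (hq0 : 0 < q) (hq1 : q < 1) (r n : nat) (hr : (1 <= r)%nat) (x : R) :
  (forall m : nat, jackson_converges q (qBernPoly q r m)) /\
  qBernPoly q r n x =
    sum_f_R0 (fun k => qbinom q n k * jackson_integral q (qBernPoly q r (n - k))
                        * qBernPoly q 1 k x) n /\
  qBernPoly q r n x =
    sum_f_R0 (fun k => qbinom q n k * qBernNum q (r - 1) (n - k) * qBernPoly q 1 k x) n /\
  (forall m : nat, jackson_integral q (qBernPoly q r m) = qBernNum q (r - 1) m).
Proof.
  destruct r as [|r]; [lia|].
  replace (S r - 1)%nat with r by lia.
  split; [|split; [|split]].
  - intro m. eexists. apply jackson_sum_qBernPoly; assumption.
  - rewrite qBernPoly_addition by assumption. apply sum_eq. intros k _.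
    rewrite jackson_integral_qBernPoly_S by assumption. reflexivity.
  - apply qBernPoly_addition; assumption.
  - intro m. apply jackson_integral_qBernPoly_S; assumption.
Qed.
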